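(* Fix $L\ge20$. For any pattern $(\mathbf a,\mathbf e)$ there exists $S\subseteq V(\Gamma)$ such that $p_{\mathrm{SD}}((\mathbf a,\mathbf e)_S)\ge p_{\mathrm{SD}}(\mathbf a,\mathbf e)-55L\sqrt d$ and, for all $(i,w)\in S$, \[\sum_{(i',w')\in N_{\Gamma_{\mathrm{SD}}}(i,w)\cap S}\frac{a_{i,w}a_{i',w'}}{n}\cdot\frac{\epsilon_{i,w,i',w'}^2}{15}\ge\frac L{10}\,a_{i,w}\log\Big(\frac{en}{a_{i,w}}\Big),\] where the right side is interpreted as $0$ when $a_{i,w}=0$.
   Context: $d\ge2$, $H$ is a $d$-regular graph on $[h]$. $D^{>0}=\{2^k/\sqrt{nh}:k\in\mathbb{Z},k\ge0\}$; $\Gamma$ is the graph on $[h]\times D^{>0}$ with $(i,w)\sim_\Gamma(i',w')$ iff $ii'\in E(H)$ and $w/w'\in(d^{-1/2},d^{1/2})$. A pattern is $(\mathbf a,\mathbf e)$: nonnegative integers $a_{i,w}$ with $\sum_wa_{i,w}\le n$ for each $i$, $\sum w^2a_{i,w}\le10$, some $w_0\in D^{>0}$ with $a_{i,w}=0$ unless $w_0\le w\le dw_0$; integers $e_{i,w,i',w'}$ for edges of $\Gamma$ (symmetric) with $0\le e\le\min(a_{i,w},a_{i',w'})$. Sub-pattern $(\mathbf a,\mathbf e)_S$: keep $a_{i,w}$ for $(i,w)\in S$ (else $0$) and $e$ on edges inside $S$ (else $0$). $\epsilon_{i,w,i',w'}=e_{i,w,i',w'}n/(a_{i,w}a_{i',w'})-1$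 if $a_{i,w},a_{i',w'}\ne0$, and $=1$ otherwise. $\Gamma_{\mathrm{SD}}=\Gamma_{\mathrm{SD}}(\mathbf a,\mathbf e)$ is the spanning subgraph of $\Gamma$ consisting of the edges with $-1\le\epsilon_{i,w,i',w'}\le e^2-1$, and $p_{\mathrm{SD}}(\mathbf a,\mathbf e)=\big|\sum_{(i,w)(i',w')\in E(\Gamma_{\mathrm{SD}})}\frac{ww'a_{i,w}a_{i',w'}}{n}\epsilon_{i,w,i',w'}\big|$ (with $\Gamma_{\mathrm{SD}}$ determined by the pattern in question). *)

From Stdlib Require Import Reals Lra Lia List.
From Stdlib Require Import Classical ClassicalDescription.
Import ListNotations.
Open Scope R_scope.

Definition sumR (m : nat) (f : nat -> R) : R :=
  fold_right Rplus 0 (map f (seq 0 m)).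

Definition indR (P : Prop) : R :=
  if excluded_middle_informative P then 1 else 0.

(* H: simple graph on [h] = {0,...,h-1} given by a boolean adjacency. *)
Definition simple_graph (adj : nat -> nat -> bool) : Prop :=
  (forall i j, adj i j = adj j i) /\ (forall i, adj i i = false).

Definition regular (h d : nat) (adj : nat -> nat -> bool) : Prop :=
  forall i, (i < h)%nat -> length (filter (fun j => adj i j) (seq 0 h)) = d.

(* The element w = 2^k / sqrt(n h) of D^{>0} is encoded by k : nat. *)
Definition wt (n h k : nat) : R := 2 ^ k / sqrt (INR n * INR h).

(* Vertex (i,k) of Gamma is (i, 2^k/sqrt(nh)) with i < h.
   Edges: ii' in E(H) and w/w' in (d^{-1/2}, d^{1/2}). *)
Definition GammaE (h d : nat) (adj : nat -> nat -> bool)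
    (i k i' k' : nat) : Prop :=
  (i < h)%nat /\ (i' < h)%nat /\ adj i i' = true /\
  / sqrt (INR d) < 2 ^ k / 2 ^ k' < sqrt (INR d).

Definition eps (n : nat) (a : nat -> nat -> nat)
    (e : nat -> nat -> nat -> nat -> nat) (i k i' k' : nat) : R :=
  if (Nat.eqb (a i k) 0 || Nat.eqb (a i' k') 0)%bool then 1
  else INR (e i k i' k') * INR n / (INR (a i k) * INR (a i' k')) - 1.

Definition SDE (h d : nat) (adj : nat -> nat -> bool) (n : nat)
    (a : nat -> nat -> nat) (e : nat -> nat -> nat -> nat -> nat)
    (i k i' k' : nat) : Prop :=
  GammaE h d adj i k i' k' /\
  -1 <= eps n a e i k i' k' <= exp 1 ^ 2 - 1.

(* Range of levels k summed over: k < K.  For a pattern with base level k0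
   (w0 = 2^k0/sqrt(nh)) the support lies in k0 <= k <= k0 + log2 d < K. *)
Definition Kb (k0 d : nat) : nat := (k0 + d + 1)%nat.

(* p_SD(a,e): sum over (unordered) edges of Gamma_SD = half the sum over
   ordered adjacent pairs (the summand is symmetric). *)
Definition pSD (h d : nat) (adj : nat -> nat -> bool) (n K : nat)
    (a : nat -> nat -> nat) (e : nat -> nat -> nat -> nat -> nat) : R :=
  Rabs (/ 2 *
    sumR h (fun i => sumR K (fun k => sumR h (fun i' => sumR K (fun k' =>
      indR (SDE h d adj n a e i k i' k') *
      (wt n h k * wt n h k' * INR (a i k) * INR (a i' k') / INR n
         * eps n a e i k i' k')))))).

(* (a,e) is a pattern with base level k0 (i.e. w0 = 2^k0/sqrt(nh)). *)
Definition is_pattern (h d : nat) (adj : nat -> nat -> bool) (n k0 : nat)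
    (a : nat -> nat -> nat) (e : nat -> nat -> nat -> nat -> nat) : Prop :=
  (forall i k, (i < h)%nat -> a i k <> 0%nat ->
      (k0 <= k)%nat /\ (2 ^ k <= d * 2 ^ k0)%nat) /\
  (forall i, (i < h)%nat -> sumR (Kb k0 d) (fun k => INR (a i k)) <= INR n) /\
  sumR h (fun i => sumR (Kb k0 d) (fun k => wt n h k ^ 2 * INR (a i k))) <= 10 /\
  (forall i k i' k', GammaE h d adj i k i' k' ->
      e i k i' k' = e i' k' i k /\
      (e i k i' k' <= Nat.min (a i k) (a i' k'))%nat).

Definition subA (S : nat -> nat -> bool) (a : nat -> nat -> nat) :
    nat -> nat -> nat :=
  fun i k => if S i k then a i k else 0%nat.

Definition subE (S : nat -> nat -> bool)
    (e : nat -> nat -> nat -> nat -> nat) : nat -> nat -> nat -> nat -> nat :=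
  fun i k i' k' => if (S i k && S i' k')%bool then e i k i' k' else 0%nat.

Definition alog (n a : nat) : R :=
  if Nat.eqb a 0 then 0 else INR a * ln (exp 1 * INR n / INR a).

From Stdlib Require Import Reals Lra Lia List.
From Stdlib Require Import Classical ClassicalDescription.
Open Scope R_scope.

(* Start from S = V(Gamma) and repeatedly delete a vertex of S at which
   the required inequality fails.  Deleting (i,w) changes the signed sum behind p_SD by
   twice the sum of w w' a a' eps / n over its Gamma_SD-neighbours in S.  Bounding each
   term by AM-GM with a free parameter, optimising it, and using that the eps^2-sum at
   (i,w) is below (L/10) a log(en/a), this change is at most the budget
   D(i,w) = sqrt(3L/2) sqrt(Y_i) sqrt(a log(en/a) w^2 a / n), where Y_i is the w^2 a-mass
   of the H-neighbours of i.  Since a log(en/a) / n <= min(1, 2 sqrt(a/n)), the levels w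
   contribute a geometric series and sum_w D(i,w) <= 12 sqrt(3L/2) sqrt(Y_i y_i), with
   y_i the mass of i; AM-GM, d-regularity and sum_i y_i <= 10 bound the total budget by
   55 L sqrt d. *)

Lemma sumR_0 f : sumR 0 f = 0.
Proof. reflexivity. Qed.

Lemma sumR_S m f : sumR (S m) f = sumR m f + f m.
Proof.
  unfold sumR. rewrite seq_S, map_app, fold_right_app. simpl.
  induction (map f (seq 0 m)) as [|x l IH]; simpl; lra.
Qed.

Lemma sumR_shift m f : sumR (S m) f = f 0%nat + sumR m (fun k => f (S k)).
Proof. induction m; rewrite sumR_S; [rewrite !sumR_0 | rewrite IHm, sumR_S]; lra. Qed.

Lemma sumR_ext m f g : (forall k, (k < m)%nat -> f k = g k) -> sumR m f = sumR m g.
Proof.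
  induction m as [|m IH]; intros H; [reflexivity|].
  rewrite !sumR_S, IH, H; auto; intros; apply H; lia.
Qed.

Lemma sumR_le m f g : (forall k, (k < m)%nat -> f k <= g k) -> sumR m f <= sumR m g.
Proof.
  induction m as [|m IH]; intros H; [rewrite !sumR_0; lra|].
  rewrite !sumR_S. apply Rplus_le_compat; [apply IH; intros|]; apply H; lia.
Qed.

Lemma sumR_const m c : sumR m (fun _ => c) = INR m * c.
Proof. induction m; [rewrite sumR_0; simpl; ring | rewrite sumR_S, IHm, S_INR; ring]. Qed.

Lemma sumR_nonneg m f : (forall k, (k < m)%nat -> 0 <= f k) -> 0 <= sumR m f.
Proof.
  intros H. rewrite <- (Rmult_0_r (INR m)), <- sumR_const. now apply sumR_le.
Qed.

Lemma sumR_plus m f g : sumR m (fun k => f k + g k) = sumR m f + sumR m g.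
Proof. induction m; [rewrite !sumR_0 | rewrite !sumR_S, IHm]; lra. Qed.

Lemma sumR_minus m f g : sumR m (fun k => f k - g k) = sumR m f - sumR m g.
Proof. induction m; [rewrite !sumR_0 | rewrite !sumR_S, IHm]; lra. Qed.

Lemma sumR_scal_l m c f : sumR m (fun k => c * f k) = c * sumR m f.
Proof. induction m; [rewrite !sumR_0 | rewrite !sumR_S, IHm]; lra. Qed.

Lemma sumR_scal_r m c f : sumR m (fun k => f k * c) = sumR m f * c.
Proof. induction m; [rewrite !sumR_0 | rewrite !sumR_S, IHm]; lra. Qed.

Lemma Rabs_sumR_le m f : Rabs (sumR m f) <= sumR m (fun k => Rabs (f k)).
Proof.
  induction m; [rewrite !sumR_0, Rabs_R0; lra|].
  rewrite !sumR_S. eapply Rle_trans; [apply Rabs_triang | lra].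
Qed.

Lemma sumR_swap m p (f : nat -> nat -> R) :
  sumR m (fun i => sumR p (fun j => f i j)) = sumR p (fun j => sumR m (fun i => f i j)).
Proof.
  induction m as [|m IH].
  - rewrite sumR_0, <- (Rmult_0_r (INR p)), <- sumR_const.
    apply sumR_ext; reflexivity.
  - rewrite sumR_S, IH, <- sumR_plus. apply sumR_ext. intros. now rewrite sumR_S.
Qed.

Lemma sumR_term_le m j f : (forall k, (k < m)%nat -> 0 <= f k) -> (j < m)%nat ->
  f j <= sumR m f.
Proof.
  induction m as [|m IH]; intros H Hj; [lia|].
  rewrite sumR_S. assert (0 <= sumR m f) by (apply sumR_nonneg; intros; apply H; lia).
  destruct (Nat.eq_dec j m) as [->|Hjm]; [lra|].
  assert (f j <= sumR m f) by (apply IH; [intros; apply H|]; lia).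
  specialize (H m ltac:(lia)). lra.
Qed.

Definition b2R (b : bool) : R := if b then 1 else 0.

Lemma b2R_nonneg b : 0 <= b2R b.
Proof. destruct b; simpl; lra. Qed.

Lemma b2R_le1 b : b2R b <= 1.
Proof. destruct b; simpl; lra. Qed.

Lemma sumR_count m (p : nat -> bool) :
  sumR m (fun k => b2R (p k)) = INR (length (filter p (seq 0 m))).
Proof.
  induction m; [reflexivity|].
  rewrite sumR_S, IHm, seq_S, filter_app, length_app. simpl.
  destruct (p m); simpl; rewrite ?plus_INR; simpl; lra.
Qed.

Lemma sumR_pick m j f : (j < m)%nat ->
  sumR m (fun k => b2R (Nat.eqb k j) * f k) = f j.
Proof.
  induction m as [|m IH]; intros Hj; [lia|].
  rewrite sumR_S. destruct (Nat.eq_dec j m) as [->|Hjm].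
  - rewrite Nat.eqb_refl, (sumR_ext m _ (fun _ => 0)), sumR_const; simpl; [ring|].
    intros k Hk. replace (Nat.eqb k m) with false by (symmetry; apply Nat.eqb_neq; lia).
    simpl; ring.
  - rewrite IH by lia. replace (Nat.eqb m j) with false by (symmetry; apply Nat.eqb_neq; lia).
    simpl; ring.
Qed.

Definition dsum (h K : nat) (f : nat -> nat -> R) : R :=
  sumR h (fun i => sumR K (fun k => f i k)).

Lemma dsum_ext h K f g : (forall i k, (i < h)%nat -> (k < K)%nat -> f i k = g i k) ->
  dsum h K f = dsum h K g.
Proof. intros; apply sumR_ext; intros; apply sumR_ext; intros; auto. Qed.

Lemma dsum_le h K f g : (forall i k, (i < h)%nat -> (k < K)%nat -> f i k <= g i k) ->
  dsum h K f <= dsum h K g.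
Proof. intros; apply sumR_le; intros; apply sumR_le; intros; auto. Qed.

Lemma dsum_nonneg h K f : (forall i k, (i < h)%nat -> (k < K)%nat -> 0 <= f i k) ->
  0 <= dsum h K f.
Proof. intros; apply sumR_nonneg; intros; apply sumR_nonneg; intros; auto. Qed.

Lemma dsum_plus h K f g : dsum h K (fun i k => f i k + g i k) = dsum h K f + dsum h K g.
Proof. unfold dsum. rewrite <- sumR_plus. apply sumR_ext; intros. apply sumR_plus. Qed.

Lemma dsum_minus h K f g : dsum h K (fun i k => f i k - g i k) = dsum h K f - dsum h K g.
Proof. unfold dsum. rewrite <- sumR_minus. apply sumR_ext; intros. apply sumR_minus. Qed.

Lemma dsum_scal_l h K c f : dsum h K (fun i k => c * f i k) = c * dsum h K f.
Proof. unfold dsum. rewrite <- sumR_scal_l. apply sumR_ext; intros. apply sumR_scal_l. Qed.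

Lemma Rabs_dsum_le h K f : Rabs (dsum h K f) <= dsum h K (fun i k => Rabs (f i k)).
Proof.
  eapply Rle_trans; [apply Rabs_sumR_le | apply sumR_le; intros; apply Rabs_sumR_le].
Qed.

Definition delta2 (i0 k0 i k : nat) : R := b2R (Nat.eqb i i0) * b2R (Nat.eqb k k0).

Lemma dsum_delta2 h K i0 k0 F : (i0 < h)%nat -> (k0 < K)%nat ->
  dsum h K (fun i k => delta2 i0 k0 i k * F i k) = F i0 k0.
Proof.
  intros Hi Hk. unfold dsum, delta2.
  rewrite (sumR_ext h _ (fun i => b2R (Nat.eqb i i0) * F i k0)).
  - now apply (sumR_pick h i0 (fun i => F i k0)).
  - intros i _. rewrite <- (sumR_pick K k0 (F i)), <- sumR_scal_l by auto.
    apply sumR_ext; intros; ring.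
Qed.

(** * Level sums and the function [a log (e n / a)] *)

(* [geom_tail] is a potential for [geom_weight]: [geom_tail_step] telescopes along
   the doubling scales [2^k rho]. *)
Definition geom_weight (r : R) : R := if Rle_dec r 1 then r else sqrt (2 / r).
Definition geom_tail (r : R) : R := if Rle_dec r 1 then 12 - 2 * r else 4 * sqrt (2 / r).

Lemma sqrt2_bounds : 4/3 <= sqrt 2 <= 3/2.
Proof.
  split; [rewrite <- (sqrt_square (4/3)) | rewrite <- (sqrt_square (3/2))];
    try apply sqrt_le_1_alt; lra.
Qed.

Lemma sqrt_div_le_sqrt2 r : 1 <= r -> sqrt (2 / r) <= sqrt 2.
Proof.
  intros Hr. apply sqrt_le_1_alt.
  apply Rmult_le_reg_r with r; [lra|]. unfold Rdiv. rewrite Rmult_assoc, Rinv_l; nra.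
Qed.

Lemma geom_weight_nonneg r : 0 <= r -> 0 <= geom_weight r.
Proof. intros; unfold geom_weight; destruct Rle_dec; [lra | apply sqrt_pos]. Qed.

Lemma geom_tail_nonneg r : 0 <= r -> 0 <= geom_tail r.
Proof. intros; unfold geom_tail; destruct Rle_dec; [lra | pose proof (sqrt_pos (2 / r)); lra]. Qed.

Lemma geom_tail_le_12 r : 0 <= r -> geom_tail r <= 12.
Proof.
  intros; unfold geom_tail; destruct Rle_dec; [lra|].
  pose proof (sqrt_div_le_sqrt2 r ltac:(lra)). pose proof sqrt2_bounds. lra.
Qed.

Lemma geom_tail_step r : 0 <= r -> geom_weight r + geom_tail (2 * r) <= geom_tail r.
Proof.
  intros Hr. pose proof sqrt2_bounds.
  unfold geom_weight, geom_tail. destruct (Rle_dec r 1), (Rle_dec (2 * r) 1); try lra.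
  - pose proof (sqrt_div_le_sqrt2 (2 * r) ltac:(lra)). lra.
  - replace (sqrt (2 / r)) with (sqrt 2 * sqrt (2 / (2 * r))).
    + pose proof (sqrt_pos (2 / (2 * r))). nra.
    + rewrite <- sqrt_mult by (try apply Rlt_le, Rdiv_lt_0_compat; lra).
      f_equal. field. lra.
Qed.

Lemma sum_geom_weight_le_tail K rho : 0 <= rho ->
  sumR K (fun k => geom_weight (2 ^ k * rho)) <= geom_tail rho.
Proof.
  revert rho. induction K as [|K IH]; intros rho Hr.
  - rewrite sumR_0. now apply geom_tail_nonneg.
  - rewrite sumR_shift, (sumR_ext K _ (fun k => geom_weight (2 ^ k * (2 * rho)))).
    + pose proof (IH (2 * rho) ltac:(lra)). pose proof (geom_tail_step rho Hr).
      simpl pow. rewrite Rmult_1_l. lra.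
    + intros; simpl pow; f_equal; ring.
Qed.

Lemma ln_le_sub1 x : 0 < x -> ln x <= x - 1.
Proof. intros Hx. pose proof (exp_ineq1_le (ln x)). rewrite exp_ln in *; lra. Qed.

Lemma ln_nonneg x : 1 <= x -> 0 <= ln x.
Proof.
  intros Hx. rewrite <- ln_1. destruct (Req_dec x 1) as [->|]; [lra|].
  left; apply ln_increasing; lra.
Qed.

Lemma INR_ge1 m : (1 <= m)%nat -> 1 <= INR m.
Proof. intros; change 1 with (INR 1); now apply le_INR. Qed.

Lemma alog_eq n m : (1 <= m)%nat -> (m <= n)%nat ->
  alog n m = INR m * (1 + ln (INR n / INR m)).
Proof.
  intros Hm Hmn. unfold alog.
  replace (Nat.eqb m 0) with false by (symmetry; apply Nat.eqb_neq; lia).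
  pose proof (INR_ge1 m Hm). assert (INR m <= INR n) by (apply le_INR; lia).
  replace (exp 1 * INR n / INR m) with (exp 1 * (INR n / INR m)) by (unfold Rdiv; ring).
  rewrite ln_mult, ln_exp; [reflexivity | apply exp_pos | apply Rdiv_lt_0_compat; lra].
Qed.

Lemma alog_nonneg n m : (m <= n)%nat -> 0 <= alog n m.
Proof.
  intros Hmn. destruct m as [|m]; [unfold alog; simpl; lra|].
  rewrite alog_eq by lia. pose proof (INR_ge1 (S m) ltac:(lia)).
  assert (INR (S m) <= INR n) by (apply le_INR; lia).
  assert (0 <= ln (INR n / INR (S m))).
  { apply ln_nonneg. apply Rmult_le_reg_r with (INR (S m)); [lra|].
    unfold Rdiv. rewrite Rmult_assoc, Rinv_l; lra. }
  nra.
Qed.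

Lemma alog_le n m : (m <= n)%nat -> alog n m <= INR n.
Proof.
  intros Hmn. destruct m as [|m]; [unfold alog; simpl; apply pos_INR|].
  rewrite alog_eq by lia. pose proof (INR_ge1 (S m) ltac:(lia)).
  assert (INR (S m) <= INR n) by (apply le_INR; lia).
  pose proof (ln_le_sub1 (INR n / INR (S m)) ltac:(apply Rdiv_lt_0_compat; lra)).
  replace (INR n) with (INR (S m) * (INR n / INR (S m))) at 2 by (field; lra).
  apply Rmult_le_compat_l; lra.
Qed.

(* [ln x <= 2 (sqrt x - 1)], applied to [x = n / m]. *)
Lemma alog_div_le n m : (1 <= m)%nat -> (m <= n)%nat ->
  alog n m / INR n <= 2 * sqrt (INR m / INR n).
Proof.
  intros Hm Hmn. rewrite alog_eq by lia.
  pose proof (INR_ge1 m Hm). assert (INR m <= INR n) by (apply le_INR; lia).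
  set (A := INR m) in *. set (N := INR n) in *. set (s := sqrt (N / A)).
  assert (Hs : s * s = N / A) by (apply sqrt_sqrt, Rlt_le, Rdiv_lt_0_compat; lra).
  assert (Hs0 : 0 < s) by (apply sqrt_lt_R0, Rdiv_lt_0_compat; lra).
  assert (Hln : ln (N / A) <= 2 * (s - 1)).
  { rewrite <- Hs, ln_mult by lra. pose proof (ln_le_sub1 s Hs0). lra. }
  replace (sqrt (A / N)) with (A / N * s).
  - replace (2 * (A / N * s)) with (A * (2 * s) / N) by (field; lra).
    apply Rmult_le_compat_r; [apply Rlt_le, Rinv_0_lt_compat; lra|].
    apply Rmult_le_compat_l; lra.
  - symmetry. apply sqrt_lem_1; [apply Rlt_le, Rdiv_lt_0_compat; lra | |].
    + apply Rmult_le_pos; [apply Rlt_le, Rdiv_lt_0_compat|]; lra.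
    + replace (A / N * s * (A / N * s)) with (A / N * (A / N) * (s * s)) by ring.
      rewrite Hs. field. lra.
Qed.

(* [q] plays [alog n m / n], [s] plays [sqrt (m / n)], [X] the mass [w^2 m] of a level and
   [r] its scale; below scale 1 only [q <= 1] is used, above it [q <= 2 s]. *)
Lemma mul_le_geom_weight_sq q s r X y : 0 <= q <= 1 -> q <= 2 * s -> 0 <= s -> 0 <= r ->
  s * r <= 1 -> 0 <= X <= y -> X <= y * r ^ 2 -> q * X <= y * geom_weight r ^ 2.
Proof.
  intros Hq Hqs Hs Hr Hsr HX HXr. unfold geom_weight. destruct (Rle_dec r 1); [nra|].
  rewrite pow2_sqrt by (apply Rlt_le, Rdiv_lt_0_compat; lra).
  apply Rmult_le_reg_r with r; [lra|].
  replace (y * (2 / r) * r) with (2 * y) by (field; lra).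
  assert (q * X <= 2 * s * X) by (apply Rmult_le_compat_r; lra).
  assert (s * r * X <= X) by (rewrite <- (Rmult_1_l X) at 2; apply Rmult_le_compat_r; lra).
  nra.
Qed.

Lemma sqrt_alog_mass_le n m w y : (m <= n)%nat -> 0 <= w -> 0 <= y -> w ^ 2 * INR m <= y ->
  sqrt (alog n m * (w ^ 2 * INR m) / INR n) <= sqrt y * geom_weight (w * sqrt (INR n / y)).
Proof.
  intros Hmn Hw Hy Hwy.
  assert (Hg : 0 <= geom_weight (w * sqrt (INR n / y)))
    by (apply geom_weight_nonneg, Rmult_le_pos; [lra | apply sqrt_pos]).
  destruct (Req_dec (w ^ 2 * INR m) 0) as [Hz|Hnz].
  { rewrite Hz, Rmult_0_r. unfold Rdiv. rewrite Rmult_0_l, sqrt_0.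
    apply Rmult_le_pos; [apply sqrt_pos | exact Hg]. }
  assert (Hm : (1 <= m)%nat) by (destruct m; [simpl in Hnz; lra | lia]).
  assert (Hw2 : 0 < w ^ 2) by (destruct (Req_dec w 0) as [->|]; [simpl in Hnz; lra | nra]).
  pose proof (INR_ge1 m Hm). assert (INR m <= INR n) by (apply le_INR; lia).
  assert (HN : 0 < INR n) by lra.
  assert (Hy0 : 0 < y) by nra.
  assert (HNy : 0 <= INR n / y) by (apply Rlt_le, Rdiv_lt_0_compat; lra).
  assert (HmN : 0 <= INR m / INR n) by (apply Rlt_le, Rdiv_lt_0_compat; lra).
  rewrite <- (sqrt_pow2 _ Hg), <- sqrt_mult by (try apply pow2_ge_0; lra).
  apply sqrt_le_1_alt.
  replace (alog n m * (w ^ 2 * INR m) / INR n) with (alog n m / INR n * (w ^ 2 * INR m))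
    by (unfold Rdiv; ring).
  apply mul_le_geom_weight_sq with (s := sqrt (INR m / INR n)).
  - pose proof (alog_nonneg n m Hmn). pose proof (alog_le n m Hmn). split.
    + apply Rmult_le_pos; [lra | apply Rlt_le, Rinv_0_lt_compat; lra].
    + apply Rmult_le_reg_r with (INR n); [lra|]. unfold Rdiv. rewrite Rmult_assoc, Rinv_l; lra.
  - now apply alog_div_le.
  - apply sqrt_pos.
  - apply Rmult_le_pos; [lra | apply sqrt_pos].
  - rewrite <- (sqrt_square w), <- !sqrt_mult by (try apply Rmult_le_pos; nra).
    rewrite <- sqrt_1. apply sqrt_le_1_alt.
    replace (INR m / INR n * (w * w * (INR n / y))) with (w ^ 2 * INR m / y) by (field; lra).
    apply Rmult_le_reg_r with y; [lra|]. unfold Rdiv. rewrite Rmult_assoc, Rinv_l; lra.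
  - nra.
  - rewrite Rpow_mult_distr, pow2_sqrt by exact HNy.
    replace (y * (w ^ 2 * (INR n / y))) with (w ^ 2 * INR n) by (field; lra).
    apply Rmult_le_compat_l; lra.
Qed.

Lemma wt_nonneg n h k : 0 <= wt n h k.
Proof.
  unfold wt, Rdiv. apply Rmult_le_pos; [apply pow_le; lra|].
  destruct (Req_dec (sqrt (INR n * INR h)) 0) as [->|E]; [rewrite Rinv_0; lra|].
  apply Rlt_le, Rinv_0_lt_compat. pose proof (sqrt_pos (INR n * INR h)); lra.
Qed.

Lemma wt_sq_mul_nonneg n h k m : 0 <= wt n h k ^ 2 * INR m.
Proof. apply Rmult_le_pos; [apply pow2_ge_0 | apply pos_INR]. Qed.

Lemma sum_sqrt_alog_mass_le n h K (m : nat -> nat) :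
  (forall k, (k < K)%nat -> (m k <= n)%nat) ->
  sumR K (fun k => sqrt (alog n (m k) * (wt n h k ^ 2 * INR (m k)) / INR n))
  <= 12 * sqrt (sumR K (fun k => wt n h k ^ 2 * INR (m k))).
Proof.
  intros Hm. set (y := sumR K (fun k => wt n h k ^ 2 * INR (m k))).
  assert (Hterm : forall k, (k < K)%nat -> 0 <= wt n h k ^ 2 * INR (m k))
    by (intros; apply wt_sq_mul_nonneg).
  assert (Hy : 0 <= y) by now apply sumR_nonneg.
  set (rho := wt n h 0 * sqrt (INR n / y)).
  assert (Hrho : 0 <= rho) by (apply Rmult_le_pos; [apply wt_nonneg | apply sqrt_pos]).
  apply Rle_trans with (sumR K (fun k => sqrt y * geom_weight (2 ^ k * rho))).
  - apply sumR_le. intros k Hk.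
    replace (2 ^ k * rho) with (wt n h k * sqrt (INR n / y))
      by (unfold rho, wt, Rdiv; simpl; ring).
    apply sqrt_alog_mass_le; auto using wt_nonneg.
    now apply (sumR_term_le K k (fun k => wt n h k ^ 2 * INR (m k))).
  - rewrite sumR_scal_l, Rmult_comm. apply Rmult_le_compat_r; [apply sqrt_pos|].
    eapply Rle_trans; [apply sum_geom_weight_le_tail | apply geom_tail_le_12]; auto.
Qed.

(** * Removal budgets *)

Definition mass n h K (a : nat -> nat -> nat) (i : nat) : R :=
  sumR K (fun k => wt n h k ^ 2 * INR (a i k)).

Definition nbr_mass n h K (adj : nat -> nat -> bool) (a : nat -> nat -> nat) (i : nat) : R :=
  sumR h (fun i' => b2R (adj i i') * mass n h K a i').

Definition removal_budget n h K adj a (L : R) (i k : nat) : R :=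
  sqrt (3 / 2 * L) * sqrt (nbr_mass n h K adj a i) *
  sqrt (alog n (a i k) * (wt n h k ^ 2 * INR (a i k)) / INR n).

Lemma mass_nonneg n h K a i : 0 <= mass n h K a i.
Proof. apply sumR_nonneg; intros; apply wt_sq_mul_nonneg. Qed.

Lemma nbr_mass_nonneg n h K adj a i : 0 <= nbr_mass n h K adj a i.
Proof. apply sumR_nonneg; intros; apply Rmult_le_pos; [apply b2R_nonneg | apply mass_nonneg]. Qed.

Lemma removal_budget_nonneg n h K adj a L i k : 0 <= removal_budget n h K adj a L i k.
Proof. unfold removal_budget. repeat apply Rmult_le_pos; apply sqrt_pos. Qed.

Lemma sum_nbr_mass n h K d adj a : simple_graph adj -> regular h d adj ->
  sumR h (nbr_mass n h K adj a) = INR d * sumR h (mass n h K a).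
Proof.
  intros [Hsym _] Hreg. unfold nbr_mass. rewrite sumR_swap, <- sumR_scal_l.
  apply sumR_ext. intros i' Hi'. rewrite sumR_scal_r, <- (Hreg i' Hi'), <- sumR_count.
  f_equal. apply sumR_ext; intros; now rewrite Hsym.
Qed.

Lemma sqrt_mul_le_amgm s u v : 0 < s -> 0 <= u -> 0 <= v ->
  sqrt u * sqrt v <= (u / s + s * v) / 2.
Proof.
  intros Hs Hu Hv. rewrite <- (sqrt_sqrt u Hu) at 2. rewrite <- (sqrt_sqrt v Hv) at 2.
  set (x := sqrt u). set (y := sqrt v).
  assert (0 <= (x - s * y) ^ 2 / s) by (apply Rmult_le_pos; [apply pow2_ge_0 |
    apply Rlt_le, Rinv_0_lt_compat; lra]).
  replace ((x * x / s + s * (y * y)) / 2) with (x * y + (x - s * y) ^ 2 / s / 2) by (field; lra).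
  lra.
Qed.

(* Per vertex [i]: [sum_k budget <= 12 sqrt (3L/2) sqrt (Y_i y_i)]; AM-GM with weight
   [sqrt d] and [sum_i Y_i = d sum_i y_i] turn this into [12 sqrt (3L/2) sqrt d sum_i y_i]. *)
Lemma sum_removal_budget_le n h K d adj a L :
  (0 < d)%nat -> simple_graph adj -> regular h d adj -> 20 <= L ->
  (forall i k, (i < h)%nat -> (k < K)%nat -> (a i k <= n)%nat) ->
  sumR h (mass n h K a) <= 10 ->
  dsum h K (removal_budget n h K adj a L) <= 55 * L * sqrt (INR d).
Proof.
  intros Hd Hsg Hreg HL Hmn Hmass.
  set (s := sqrt (INR d)). set (c := sqrt (3 / 2 * L)).
  assert (Hs : 0 < s) by (apply sqrt_lt_R0, lt_0_INR; lia).
  assert (Hss : s * s = INR d) by apply sqrt_sqrt, pos_INR.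
  assert (Hc : 0 <= c <= 55 * L / 120).
  { split; [apply sqrt_pos|]. unfold c.
    rewrite <- (sqrt_square (55 * L / 120)) by lra. apply sqrt_le_1_alt. nra. }
  apply Rle_trans with
    (sumR h (fun i => c * 12 * ((nbr_mass n h K adj a i / s + s * mass n h K a i) / 2))).
  - apply sumR_le. intros i Hi. unfold removal_budget. fold c.
    rewrite sumR_scal_l.
    pose proof (sum_sqrt_alog_mass_le n h K (a i) (fun k => Hmn i k Hi)) as Hlev.
    fold (mass n h K a i) in Hlev.
    pose proof (sqrt_mul_le_amgm s _ _ Hs (nbr_mass_nonneg n h K adj a i) (mass_nonneg n h K a i)).
    pose proof (sqrt_pos (nbr_mass n h K adj a i)).
    apply Rle_trans with (c * sqrt (nbr_mass n h K adj a i) * (12 * sqrt (mass n h K a i)));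
      [apply Rmult_le_compat_l|]; nra.
  - rewrite sumR_scal_l,
      (sumR_ext h _ (fun i => nbr_mass n h K adj a i * (/ s / 2) + mass n h K a i * (s / 2)))
      by (intros; field; lra).
    rewrite sumR_plus, !sumR_scal_r, (sum_nbr_mass n h K d adj a Hsg Hreg), <- Hss.
    replace (s * s * sumR h (mass n h K a) * (/ s / 2) + sumR h (mass n h K a) * (s / 2))
      with (s * sumR h (mass n h K a)) by (field; lra).
    pose proof (sumR_nonneg h (mass n h K a) (fun i _ => mass_nonneg n h K a i)).
    apply Rle_trans with (55 * L / 120 * 12 * (s * 10)); [|lra].
    apply Rmult_le_compat; nra.
Qed.

(** * The signed sum of a sub-pattern *)

Lemma indR_true (P : Prop) : P -> indR P = 1.
Proof. intros; unfold indR; destruct excluded_middle_informative; tauto. Qed.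

Lemma indR_false (P : Prop) : ~ P -> indR P = 0.
Proof. intros; unfold indR; destruct excluded_middle_informative; tauto. Qed.

Lemma indR_nonneg P : 0 <= indR P.
Proof. unfold indR; destruct excluded_middle_informative; lra. Qed.

Lemma indR_iff (P Q : Prop) : (P <-> Q) -> indR P = indR Q.
Proof. intros H. destruct (classic P); [rewrite !indR_true | rewrite !indR_false]; tauto. Qed.

Lemma indR_and_b2R P b : indR (P /\ b = true) = indR P * b2R b.
Proof.
  destruct b; simpl.
  - rewrite Rmult_1_r. apply indR_iff. tauto.
  - rewrite Rmult_0_r. apply indR_false. now intros [_ ?].
Qed.

Definition remove_vertex (S : nat -> nat -> bool) (i0 k0 : nat) : nat -> nat -> bool :=
  fun i k => (S i k && negb (Nat.eqb i i0 && Nat.eqb k k0))%bool.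

Lemma b2R_remove_vertex S i0 k0 i k : S i0 k0 = true ->
  b2R (remove_vertex S i0 k0 i k) = b2R (S i k) - delta2 i0 k0 i k.
Proof.
  intros H. unfold remove_vertex, delta2.
  destruct (Nat.eqb_spec i i0) as [->|], (Nat.eqb_spec k k0) as [->|];
    [rewrite H | destruct (S i0 k) | destruct (S i k0) | destruct (S i k)]; simpl; lra.
Qed.

Section InducedSum.

Variables (h d n : nat) (adj : nat -> nat -> bool).
Variables (a : nat -> nat -> nat) (e : nat -> nat -> nat -> nat -> nat).

Definition edge_term (i k i' k' : nat) : R :=
  indR (SDE h d adj n a e i k i' k') *
  (wt n h k * wt n h k' * INR (a i k) * INR (a i' k') / INR n * eps n a e i k i' k').

(* Twice the signed sum inside [p_SD] of the sub-pattern [(a,e)_S]. *)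
Definition induced_sum (K : nat) (S : nat -> nat -> bool) : R :=
  dsum h K (fun i k => dsum h K (fun i' k' =>
    b2R (S i k) * b2R (S i' k') * edge_term i k i' k')).

Lemma pSD_subpattern K S :
  pSD h d adj n K (subA S a) (subE S e) = Rabs (/ 2 * induced_sum K S).
Proof.
  unfold pSD, induced_sum, dsum, edge_term. do 2 f_equal.
  apply sumR_ext; intros i _; apply sumR_ext; intros k _.
  apply sumR_ext; intros i' _; apply sumR_ext; intros k' _.
  assert (Hsub : forall j l, subA S a j l = if S j l then a j l else 0%nat) by reflexivity.
  rewrite !Hsub. destruct (S i k) eqn:Hik, (S i' k') eqn:Hik'; simpl; [|unfold Rdiv; ring..].
  assert (Heps : eps n (subA S a) (subE S e) i k i' k' = eps n a e i k i' k')
    by (unfold eps, subA, subE; now rewrite Hik, Hik').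
  rewrite Heps, (indR_iff _ (SDE h d adj n a e i k i' k')) by (unfold SDE; now rewrite Heps).
  ring.
Qed.

Definition box (K : nat) : nat -> nat -> bool := fun i k => (Nat.ltb i h && Nat.ltb k K)%bool.

Lemma b2R_box K i k : (i < h)%nat -> (k < K)%nat -> b2R (box K i k) = 1.
Proof. intros Hi Hk. unfold box. apply Nat.ltb_lt in Hi, Hk. now rewrite Hi, Hk. Qed.

Lemma pSD_induced_box K : pSD h d adj n K a e = Rabs (/ 2 * induced_sum K (box K)).
Proof.
  unfold pSD, induced_sum, dsum, edge_term. do 2 f_equal.
  apply sumR_ext; intros i Hi; apply sumR_ext; intros k Hk.
  apply sumR_ext; intros i' Hi'; apply sumR_ext; intros k' Hk'.
  rewrite !b2R_box by auto. ring.
Qed.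

Hypothesis d_pos : (0 < d)%nat.
Hypothesis adj_simple : simple_graph adj.
Hypothesis e_sym : forall i k i' k', GammaE h d adj i k i' k' -> e i k i' k' = e i' k' i k.

Lemma GammaE_sym i k i' k' : GammaE h d adj i k i' k' -> GammaE h d adj i' k' i k.
Proof.
  intros (Hi & Hi' & Ha & H1 & H2).
  assert (Hsd : 0 < sqrt (INR d)) by (apply sqrt_lt_R0, lt_0_INR; lia).
  assert (P1 : 0 < 2 ^ k) by (apply pow_lt; lra).
  assert (P2 : 0 < 2 ^ k') by (apply pow_lt; lra).
  assert (Hx : 0 < 2 ^ k / 2 ^ k') by (apply Rdiv_lt_0_compat; auto).
  unfold GammaE. replace (2 ^ k' / 2 ^ k) with (/ (2 ^ k / 2 ^ k')) by (field; lra).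
  repeat split; auto.
  - destruct adj_simple as [Hsym _]. now rewrite Hsym.
  - apply Rinv_lt_contravar; nra.
  - rewrite <- (Rinv_inv (sqrt (INR d))). apply Rinv_lt_contravar; auto.
    apply Rmult_lt_0_compat; auto. now apply Rinv_0_lt_compat.
Qed.

Lemma edge_term_sym i k i' k' : edge_term i k i' k' = edge_term i' k' i k.
Proof.
  unfold edge_term. destruct (classic (GammaE h d adj i k i' k')) as [G|G].
  - assert (Heps : eps n a e i k i' k' = eps n a e i' k' i k).
    { unfold eps. rewrite (e_sym _ _ _ _ G), Bool.orb_comm.
      destruct (_ || _)%bool; [reflexivity|]. now rewrite (Rmult_comm (INR (a i k))). }
    rewrite Heps, (indR_iff _ (SDE h d adj n a e i' k' i k)).
    + unfold Rdiv; ring.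
    + unfold SDE. rewrite Heps. pose proof (GammaE_sym i k i' k'). tauto.
  - rewrite !indR_false; [unfold Rdiv; ring | |].
    + intros [G' _]. now apply G, GammaE_sym.
    + now intros [G' _].
Qed.

Lemma edge_term_diag i k : edge_term i k i k = 0.
Proof.
  unfold edge_term. rewrite indR_false; [unfold Rdiv; ring|].
  intros [(_ & _ & Ha & _) _]. destruct adj_simple as [_ Hirr]. congruence.
Qed.

Lemma induced_sum_remove_vertex K S i0 k0 : (i0 < h)%nat -> (k0 < K)%nat -> S i0 k0 = true ->
  induced_sum K S - induced_sum K (remove_vertex S i0 k0)
  = 2 * dsum h K (fun i k => b2R (S i k) * edge_term i0 k0 i k).
Proof.
  (* Expanding [(s - delta)(s' - delta')] leaves [delta s' + s delta' - delta delta']; by symmetry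
     the two cross terms agree, and the last one is a diagonal term, which vanishes. *)
  intros Hi Hk HS. set (T := edge_term). unfold induced_sum. rewrite <- dsum_minus.
  set (F := fun i k => dsum h K (fun i' k' => b2R (S i' k') * T i k i' k')).
  rewrite (dsum_ext h K _ (fun i k => delta2 i0 k0 i k * F i k
      + b2R (S i k) * T i k i0 k0 - delta2 i0 k0 i k * T i k i0 k0)).
  - rewrite dsum_minus, dsum_plus, (dsum_delta2 h K i0 k0 F),
      (dsum_delta2 h K i0 k0 (fun i k => T i k i0 k0)) by auto.
    rewrite (dsum_ext h K (fun i k => b2R (S i k) * T i k i0 k0)
      (fun i k => b2R (S i k) * T i0 k0 i k)) by (intros; unfold T; now rewrite edge_term_sym).
    unfold F, T. rewrite edge_term_diag. ring.
  - intros i k _ _. rewrite <- dsum_minus.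
    rewrite (dsum_ext h K _ (fun i' k' => delta2 i0 k0 i k * (b2R (S i' k') * T i k i' k')
        + b2R (S i k) * (delta2 i0 k0 i' k' * T i k i' k')
        - delta2 i0 k0 i k * (delta2 i0 k0 i' k' * T i k i' k'))).
    + rewrite dsum_minus, dsum_plus, !dsum_scal_l, (dsum_delta2 h K i0 k0 (T i k)) by auto.
      unfold F. ring.
    + intros; rewrite !b2R_remove_vertex by auto. unfold T. ring.
Qed.

End InducedSum.

(** * The cost of deleting a vertex *)

Lemma mul_le_amgm p q t : 0 < t -> p * q <= t / 2 * p ^ 2 + q ^ 2 / (2 * t).
Proof.
  intros Ht. assert (0 <= (t * p - q) ^ 2 / (2 * t))
    by (apply Rmult_le_pos; [apply pow2_ge_0 | apply Rlt_le, Rinv_0_lt_compat; lra]).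
  replace (t / 2 * p ^ 2 + q ^ 2 / (2 * t)) with (p * q + (t * p - q) ^ 2 / (2 * t))
    by (field; lra).
  lra.
Qed.

(* Optimising [t] in [t A + B / t]; the degenerate cases [A = 0] or [B = 0] let [t] tend to
   [+oo] or [0]. *)
Lemma le_2sqrt_of_forall_le c A B : 0 <= A -> 0 <= B ->
  (forall t, 0 < t -> c <= t * A + B / t) -> c <= 2 * sqrt (A * B).
Proof.
  intros HA HB H.
  destruct (Req_dec A 0) as [->|A0]; [|destruct (Req_dec B 0) as [->|B0]].
  - rewrite Rmult_0_l, sqrt_0. destruct (Rle_dec c 0); [lra|].
    specialize (H ((2 * B + 1) / c) ltac:(apply Rdiv_lt_0_compat; lra)).
    replace (B / ((2 * B + 1) / c)) with (B * c / (2 * B + 1)) in H by (field; lra).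
    assert (B * c / (2 * B + 1) < c).
    { apply Rmult_lt_reg_r with (2 * B + 1); [lra|].
      unfold Rdiv. rewrite Rmult_assoc, Rinv_l by lra. nra. }
    lra.
  - rewrite Rmult_0_r, sqrt_0. destruct (Rle_dec c 0); [lra|].
    specialize (H (c / (2 * A + 1)) ltac:(apply Rdiv_lt_0_compat; lra)).
    unfold Rdiv in H. rewrite Rmult_0_l in H.
    assert (c * / (2 * A + 1) * A < c).
    { apply Rmult_lt_reg_r with (2 * A + 1); [lra|].
      replace (c * / (2 * A + 1) * A * (2 * A + 1)) with (c * A) by (field; lra). nra. }
    lra.
  - assert (sA : 0 < sqrt A) by (apply sqrt_lt_R0; lra).
    assert (sB : 0 < sqrt B) by (apply sqrt_lt_R0; lra).
    specialize (H (sqrt B / sqrt A) ltac:(apply Rdiv_lt_0_compat; auto)).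
    rewrite sqrt_mult by lra.
    replace (sqrt B / sqrt A * A + B / (sqrt B / sqrt A)) with (2 * (sqrt A * sqrt B)) in H;
      [lra|].
    pose proof (sqrt_sqrt A HA) as EA. pose proof (sqrt_sqrt B HB) as EB.
    set (sa := sqrt A) in *. set (sb := sqrt B) in *. rewrite <- EA, <- EB. field. lra.
Qed.

Lemma Rdiv_INR_nonneg x m : 0 <= x -> 0 <= x / INR m.
Proof.
  intros Hx. unfold Rdiv. apply Rmult_le_pos; [exact Hx|].
  destruct m; [simpl; rewrite Rinv_0; lra|].
  apply Rlt_le, Rinv_0_lt_compat, lt_0_INR; lia.
Qed.

Section RemovalCost.

Variables (h d n : nat) (adj : nat -> nat -> bool).
Variables (a : nat -> nat -> nat) (e : nat -> nat -> nat -> nat -> nat).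

Definition eps_degree (K : nat) (S : nat -> nat -> bool) (i k : nat) : R :=
  dsum h K (fun i' k' => indR (SDE h d adj n a e i k i' k' /\ S i' k' = true) *
    (INR (a i k) * INR (a i' k') / INR n * (eps n a e i k i' k' ^ 2 / 15))).

Lemma indR_SDE_le_adj i0 k0 i k : indR (SDE h d adj n a e i0 k0 i k) <= b2R (adj i0 i).
Proof.
  destruct (classic (SDE h d adj n a e i0 k0 i k)) as [P|P].
  - rewrite indR_true by auto. destruct P as [(_ & _ & -> & _) _]. simpl. lra.
  - rewrite indR_false by auto. apply b2R_nonneg.
Qed.

Lemma edge_term_abs_le (s : bool) i0 k0 i k t : 0 < t ->
  b2R s * Rabs (edge_term h d n adj a e i0 k0 i k) <=
  t / 2 * 15 * (indR (SDE h d adj n a e i0 k0 i k /\ s = true) *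
    (INR (a i0 k0) * INR (a i k) / INR n * (eps n a e i0 k0 i k ^ 2 / 15)))
  + wt n h k0 ^ 2 * INR (a i0 k0) / INR n / (2 * t) *
    (b2R (adj i0 i) * (wt n h k ^ 2 * INR (a i k))).
Proof.
  intros Ht. unfold edge_term. rewrite indR_and_b2R.
  pose proof (indR_SDE_le_adj i0 k0 i k). pose proof (indR_nonneg (SDE h d adj n a e i0 k0 i k)).
  set (I := indR (SDE h d adj n a e i0 k0 i k)) in *. set (ep := eps n a e i0 k0 i k).
  set (w0 := wt n h k0). set (w := wt n h k).
  set (x := INR (a i0 k0) * INR (a i k) / INR n).
  set (q := w0 ^ 2 * INR (a i0 k0) / INR n / (2 * t) * (w ^ 2 * INR (a i k))).
  assert (HI : 0 <= b2R s * I <= b2R (adj i0 i))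
    by (pose proof (b2R_le1 s); pose proof (b2R_nonneg s); split; nra).
  assert (Hx : 0 <= x) by (apply Rdiv_INR_nonneg, Rmult_le_pos; apply pos_INR).
  assert (Hq : 0 <= q).
  { apply Rmult_le_pos; [|apply wt_sq_mul_nonneg]. unfold Rdiv at 2.
    apply Rmult_le_pos; [apply Rdiv_INR_nonneg, wt_sq_mul_nonneg|].
    apply Rlt_le, Rinv_0_lt_compat; lra. }
  replace (b2R s * Rabs (I * (w0 * w * INR (a i0 k0) * INR (a i k) / INR n * ep)))
    with (b2R s * I * x * (Rabs ep * (w0 * w))).
  2:{ replace (w0 * w * INR (a i0 k0) * INR (a i k) / INR n * ep) with (x * (w0 * w) * ep)
        by (unfold x, Rdiv; ring).
      pose proof (wt_nonneg n h k0). pose proof (wt_nonneg n h k).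
      assert (0 <= x * (w0 * w)) by (apply Rmult_le_pos; [|apply Rmult_le_pos]; auto).
      rewrite Rabs_mult, (Rabs_right I), Rabs_mult, (Rabs_right (x * (w0 * w))) by lra.
      ring. }
  pose proof (mul_le_amgm (Rabs ep) (w0 * w) t Ht) as Hamgm. rewrite pow2_abs in Hamgm.
  apply Rle_trans with (b2R s * I * x * (t / 2 * ep ^ 2 + (w0 * w) ^ 2 / (2 * t)));
    [apply Rmult_le_compat_l; nra|].
  replace (b2R s * I * x * (t / 2 * ep ^ 2 + (w0 * w) ^ 2 / (2 * t)))
    with (t / 2 * 15 * (I * b2R s * (x * (ep ^ 2 / 15))) + b2R s * I * q)
    by (unfold q, x, Rdiv; set (ni := / INR n); field; lra).
  replace (w0 ^ 2 * INR (a i0 k0) / INR n / (2 * t) * (b2R (adj i0 i) * (w ^ 2 * INR (a i k))))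
    with (b2R (adj i0 i) * q) by (unfold q; ring).
  apply Rplus_le_compat_l, Rmult_le_compat_r; lra.
Qed.

Lemma removal_cost_le_param K S i0 k0 t : 0 < t ->
  dsum h K (fun i k => b2R (S i k) * Rabs (edge_term h d n adj a e i0 k0 i k)) <=
  t / 2 * 15 * eps_degree K S i0 k0
  + wt n h k0 ^ 2 * INR (a i0 k0) / INR n / (2 * t) * nbr_mass n h K adj a i0.
Proof.
  intros Ht. eapply Rle_trans.
  { apply dsum_le. intros i k _ _. exact (edge_term_abs_le (S i k) i0 k0 i k t Ht). }
  rewrite dsum_plus, !dsum_scal_l. right. do 2 f_equal.
  unfold nbr_mass, mass, dsum. apply sumR_ext; intros. now rewrite sumR_scal_l.
Qed.

Lemma removal_cost_le K L S i0 k0 : 0 <= L -> (a i0 k0 <= n)%nat ->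
  eps_degree K S i0 k0 < L / 10 * alog n (a i0 k0) ->
  dsum h K (fun i k => b2R (S i k) * Rabs (edge_term h d n adj a e i0 k0 i k))
  <= removal_budget n h K adj a L i0 k0.
Proof.
  intros HL Ha Hviol.
  set (al := alog n (a i0 k0)) in *. set (Y := nbr_mass n h K adj a i0).
  set (m := wt n h k0 ^ 2 * INR (a i0 k0) / INR n).
  assert (Hal : 0 <= al) by now apply alog_nonneg.
  assert (HY : 0 <= Y) by apply nbr_mass_nonneg.
  assert (Hm : 0 <= m) by apply Rdiv_INR_nonneg, wt_sq_mul_nonneg.
  eapply Rle_trans.
  - apply (le_2sqrt_of_forall_le _ (3 / 4 * L * al) (m / 2 * Y)); [nra | nra |].
    intros t Ht. eapply Rle_trans; [exact (removal_cost_le_param K S i0 k0 t Ht)|].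
    fold al Y m. replace (m / (2 * t) * Y) with (m / 2 * Y / t) by (field; lra).
    apply Rplus_le_compat_r. nra.
  - unfold removal_budget. fold Y al. right.
    assert (Hc : 0 <= al * (wt n h k0 ^ 2 * INR (a i0 k0)) / INR n)
      by (apply Rdiv_INR_nonneg, Rmult_le_pos; [exact Hal | apply wt_sq_mul_nonneg]).
    assert (HAB : 0 <= 3 / 4 * L * al * (m / 2 * Y)) by (apply Rmult_le_pos; nra).
    replace 2 with (sqrt 4) at 1 by (rewrite <- (sqrt_square 2) by lra; f_equal; ring).
    rewrite <- (sqrt_mult 4), <- (sqrt_mult (3 / 2 * L)), <- sqrt_mult by nra.
    f_equal. unfold m, Rdiv. set (ni := / INR n). field.
Qed.

End RemovalCost.

(** * Greedy pruning *)

Lemma dsum_remove_vertex h K S i0 k0 F : (i0 < h)%nat -> (k0 < K)%nat -> S i0 k0 = true ->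
  dsum h K (fun i k => b2R (remove_vertex S i0 k0 i k) * F i k)
  = dsum h K (fun i k => b2R (S i k) * F i k) - F i0 k0.
Proof.
  intros Hi Hk HS. rewrite <- (dsum_delta2 h K i0 k0 F), <- dsum_minus by auto.
  apply dsum_ext; intros. rewrite b2R_remove_vertex by auto. ring.
Qed.

Section Pruning.

Variables (h d n : nat) (adj : nat -> nat -> bool).
Variables (a : nat -> nat -> nat) (e : nat -> nat -> nat -> nat -> nat).
Variables (K : nat) (L : R).
Hypothesis d_pos : (0 < d)%nat.
Hypothesis adj_simple : simple_graph adj.
Hypothesis e_sym : forall i k i' k', GammaE h d adj i k i' k' -> e i k i' k' = e i' k' i k.
Hypothesis a_le_n : forall i k, (i < h)%nat -> (k < K)%nat -> (a i k <= n)%nat.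
Hypothesis L_nonneg : 0 <= L.

Definition degree_condition (S : nat -> nat -> bool) : Prop :=
  forall i k, (i < h)%nat -> S i k = true ->
    eps_degree h d n adj a e K S i k >= L / 10 * alog n (a i k).

Definition in_box (S : nat -> nat -> bool) : Prop :=
  forall i k, S i k = true -> (i < h)%nat /\ (k < K)%nat.

Definition card (S : nat -> nat -> bool) : R := dsum h K (fun i k => b2R (S i k)).

Definition spent_budget (S : nat -> nat -> bool) : R :=
  dsum h K (fun i k => b2R (S i k) * removal_budget n h K adj a L i k).

Lemma card_remove_vertex S i0 k0 : (i0 < h)%nat -> (k0 < K)%nat -> S i0 k0 = true ->
  card (remove_vertex S i0 k0) = card S - 1.
Proof.
  intros. unfold card.
  rewrite (dsum_ext h K (fun i k => b2R (S i k)) (fun i k => b2R (S i k) * 1)) by (intros; ring).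
  rewrite <- (dsum_remove_vertex h K S i0 k0 (fun _ _ => 1)) by auto.
  apply dsum_ext; intros; ring.
Qed.

Lemma induced_sum_remove_violator S i0 k0 :
  (i0 < h)%nat -> (k0 < K)%nat -> S i0 k0 = true ->
  eps_degree h d n adj a e K S i0 k0 < L / 10 * alog n (a i0 k0) ->
  Rabs (induced_sum h d n adj a e K S - induced_sum h d n adj a e K (remove_vertex S i0 k0))
  <= 2 * removal_budget n h K adj a L i0 k0.
Proof.
  intros Hi Hk HS Hviol. rewrite induced_sum_remove_vertex by auto.
  rewrite Rabs_mult, Rabs_right by lra. apply Rmult_le_compat_l; [lra|].
  eapply Rle_trans; [apply Rabs_dsum_le|].
  eapply Rle_trans; [|apply (removal_cost_le h d n adj a e K L S); auto].
  right. apply dsum_ext; intros. rewrite Rabs_mult, Rabs_right by apply Rle_ge, b2R_nonneg.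
  reflexivity.
Qed.

Lemma not_degree_condition S : ~ degree_condition S ->
  exists i0 k0, (i0 < h)%nat /\ S i0 k0 = true /\
    eps_degree h d n adj a e K S i0 k0 < L / 10 * alog n (a i0 k0).
Proof.
  intros Hbad. apply not_all_ex_not in Hbad as [i0 Hbad].
  apply not_all_ex_not in Hbad as [k0 Hbad]. exists i0, k0.
  apply imply_to_and in Hbad as [Hi Hbad]. apply imply_to_and in Hbad as [HS Hviol].
  repeat split; auto. now apply Rnot_ge_lt.
Qed.

Lemma greedy_pruning m S : in_box S -> card S <= INR m ->
  exists S', degree_condition S' /\
    Rabs (induced_sum h d n adj a e K S - induced_sum h d n adj a e K S')
    <= 2 * (spent_budget S - spent_budget S').
Proof.
  revert S. induction m as [|m IH]; intros S Hbox Hcard.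
  all: destruct (classic (degree_condition S))
    as [Hgood | (i0 & k0 & Hi & HS & Hviol)%not_degree_condition];
    [exists S; split; [exact Hgood | rewrite !Rminus_diag, Rabs_R0; lra] |].
  all: destruct (Hbox i0 k0 HS) as [_ Hk].
  - pose proof (card_remove_vertex S i0 k0 Hi Hk HS).
    assert (0 <= card (remove_vertex S i0 k0))
      by (apply dsum_nonneg; intros; apply b2R_nonneg).
    simpl in Hcard. lra.
  - destruct (IH (remove_vertex S i0 k0)) as (S' & Hgood & Hloss).
    + intros i k HSik. apply Hbox. unfold remove_vertex in HSik.
      now apply andb_prop in HSik as [? _].
    + rewrite card_remove_vertex by auto. rewrite S_INR in Hcard. lra.
    + exists S'. split; [exact Hgood|].
      pose proof (induced_sum_remove_violator S i0 k0 Hi Hk HS Hviol).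
      assert (spent_budget (remove_vertex S i0 k0)
              = spent_budget S - removal_budget n h K adj a L i0 k0)
        by (apply dsum_remove_vertex; auto).
      set (G := induced_sum h d n adj a e K) in *.
      replace (G S - G S') with
        ((G S - G (remove_vertex S i0 k0)) + (G (remove_vertex S i0 k0) - G S')) by ring.
      eapply Rle_trans; [apply Rabs_triang | lra].
Qed.

End Pruning.

Lemma card_box_le h K : card h K (box h K) <= INR (h * K).
Proof.
  unfold card. rewrite mult_INR, <- (Rmult_1_r (INR K)), <- sumR_const, <- sumR_const.
  apply dsum_le; intros; apply b2R_le1.
Qed.

Lemma in_box_box h K : in_box h K (box h K).
Proof.
  intros i k H. unfold box in H. apply andb_prop in H as [H1 H2].
  now split; apply Nat.ltb_lt.
Qed.

Theorem proposition5p3 :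
  forall (n h d : nat) (adj : nat -> nat -> bool) (L : R) (k0 : nat)
    (a : nat -> nat -> nat) (e : nat -> nat -> nat -> nat -> nat),
  (2 <= d)%nat ->
  simple_graph adj ->
  regular h d adj ->
  20 <= L ->
  is_pattern h d adj n k0 a e ->
  exists S : nat -> nat -> bool,
    pSD h d adj n (Kb k0 d) (subA S a) (subE S e)
      >= pSD h d adj n (Kb k0 d) a e - 55 * L * sqrt (INR d) /\
    (forall i k, (i < h)%nat -> S i k = true ->
      sumR h (fun i' => sumR (Kb k0 d) (fun k' =>
        indR (SDE h d adj n a e i k i' k' /\ S i' k' = true) *
        (INR (a i k) * INR (a i' k') / INR n * (eps n a e i k i' k' ^ 2 / 15))))
      >= L / 10 * alog n (a i k)).
Proof.
  intros n h d adj L k0 a e Hd Hsg Hreg HL (_ & Hrow & Hmass & He).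
  set (K := Kb k0 d).
  assert (Hmn : forall i k, (i < h)%nat -> (k < K)%nat -> (a i k <= n)%nat).
  { intros i k Hi Hk. apply INR_le. eapply Rle_trans; [|apply (Hrow i Hi)].
    apply (sumR_term_le K k (fun k => INR (a i k))); auto using pos_INR. }
  destruct (greedy_pruning h d n adj a e K L ltac:(lia) Hsg
              (fun i k i' k' G => proj1 (He i k i' k' G))
              Hmn ltac:(lra) (h * K) (box h K) (in_box_box h K) (card_box_le h K))
    as (S & Hdeg & Hloss).
  exists S. split; [|exact Hdeg].
  assert (Htotal : spent_budget h n adj a K L (box h K) <= 55 * L * sqrt (INR d)).
  { unfold spent_budget. rewrite (dsum_ext h K _ (removal_budget n h K adj a L))
      by (intros; rewrite b2R_box by auto; ring).
    apply sum_removal_budget_le; auto; lia. }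
  assert (0 <= spent_budget h n adj a K L S)
    by (apply dsum_nonneg; intros;
        apply Rmult_le_pos; auto using b2R_nonneg, removal_budget_nonneg).
  rewrite pSD_subpattern, pSD_induced_box, !Rabs_mult, Rabs_right by lra.
  set (G := induced_sum h d n adj a e K) in *.
  pose proof (Rabs_triang (G S) (G (box h K) - G S)) as Htri.
  replace (G S + (G (box h K) - G S)) with (G (box h K)) in Htri by ring.
  lra.
Qed.
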